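(* Let $d\geq1$ and let $f:[0,1]^d\to\mathbb{R}_+$ be the function computed by some ReLU net with input dimension $d$, output dimension $1$ and arbitrary width. Then there exist affine functions $g_\alpha,h_\beta:[0,1]^d\to\mathbb{R}$ ($1\leq\alpha\leq N$, $1\leq\beta\leq M$) such that $f$ can be written as the difference of positive convex functions $$f=g-h,\qquad g:=\max_{1\leq\alpha\leq N}g_\alpha,\qquad h:=\max_{1\leq\beta\leq M}h_\beta.$$ Moreover, there exists a ReLU net $\mathcal N$ with input dimension $d$, hidden layer width $d+3$, output dimension $1$ and $\mathrm{depth}(\mathcal N)=2(M+N)$ that computes $f$ exactly on $[0,1]^d$. Finally, if $f$ is convex (so that $h$ vanishes and $f=\max_{1\leq\alpha\leq N}g_\alpha$), then the width of $\mathcal N$ can be taken to be $d+1$ and the depth can be taken to be $N$.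
   Context: For $m\geq1$, $\mathrm{ReLU}(x_1,\dots,x_m)=(\max\{0,x_1\},\dots,\max\{0,x_m\})$. A feed-forward ReLU net $\mathcal N$ with input dimension $d_{\mathrm{in}}$, hidden layer width $w$, depth $n$ and output dimension $d_{\mathrm{out}}$ is a function of the form $f_{\mathcal N}=\mathrm{ReLU}\circ A_n\circ\mathrm{ReLU}\circ A_{n-1}\circ\cdots\circ\mathrm{ReLU}\circ A_1$, mapping $\mathbb{R}^{d_{\mathrm{in}}}$ to $\mathbb{R}_+^{d_{\mathrm{out}}}$, where $A_1:\mathbb{R}^{d_{\mathrm{in}}}\to\mathbb{R}^w$, $A_j:\mathbb{R}^w\to\mathbb{R}^w$ ($2\leq j\leq n-1$), $A_n:\mathbb{R}^w\to\mathbb{R}^{d_{\mathrm{out}}}$ are affine maps. *)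

From HB Require Import structures.
From mathcomp Require Import all_boot all_order all_algebra.
From mathcomp Require Import reals.
Set Implicit Arguments. Unset Strict Implicit. Unset Printing Implicit Defensive.
Import Order.TTheory GRing.Theory Num.Theory.
Local Open Scope ring_scope.

Section ReLU.
Variable R : realType.

Definition relu (k : nat) (v : 'cV[R]_k) : 'cV[R]_k := \col_i Num.max (v i 0) 0.

Definition affine_map (m k : nat) : Type := ('M[R]_(k, m) * 'cV[R]_k)%type.
Definition app_aff (m k : nat) (A : affine_map m k) (x : 'cV[R]_m) : 'cV[R]_k :=
  A.1 *m x + A.2.

(* F : R^din -> R^dout is the function of a feed-forward ReLU net with input
   dimension din, hidden layer width w, depth n and output dimension dout:
   F = ReLU o A_n o ReLU o ... o ReLU o A_1. *)
Definition relu_net_fun (din w n dout : nat) (F : 'cV[R]_din -> 'cV[R]_dout) : Prop :=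
  (n = 1%N /\ exists A : affine_map din dout,
      forall x, F x = relu (app_aff A x))
  \/
  ((2 <= n)%N /\ exists (A1 : affine_map din w) (As : seq (affine_map w w))
                        (An : affine_map w dout),
      size As = (n - 2)%N /\
      forall x, F x = relu (app_aff An
                 (foldl (fun v A => relu (app_aff A v)) (relu (app_aff A1 x)) As))).

Definition in_cube (d : nat) (x : 'cV[R]_d) : Prop :=
  forall i, 0 <= x i 0 <= 1.

Definition affine_fun (d : nat) (g : 'cV[R]_d -> R) : Prop :=
  exists (a : 'cV[R]_d) (c : R), forall x, g x = \sum_(i < d) a i 0 * x i 0 + c.

Definition max_fam (d N : nat) (g : 'I_N.+1 -> 'cV[R]_d -> R) (x : 'cV[R]_d) : R :=
  \big[Num.max/g ord0 x]_(i < N.+1) g i x.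

Definition convex_on_cube (d : nat) (f : 'cV[R]_d -> R) : Prop :=
  forall x y (t : R), in_cube x -> in_cube y -> 0 <= t <= 1 ->
    f (t *: x + (1 - t) *: y) <= t * f x + (1 - t) * f y.


End ReLU.
Arguments relu_net_fun {R} din w n dout F.

(* Every neuron of a ReLU net is max (a . v + b) 0 for the previous layer v. Maxima of finitely
   many affine functions are closed under sums, nonnegative scalings and max, and
   max (g1 - h1) (g2 - h2) = max (g1 + h2) (g2 + h1) - (h1 + h2), so by induction every neuron
   is a difference g - h of such maxima; adding a constant makes g and h nonnegative on the cube.
   If f = g - h is convex, every y in the cube has an affine piece p - q of the decomposition
   touching f from below at y: moving from y in a generic direction one reaches points where g and
   h are each given by a single piece, and convexity along segments through such a point gives
   p - q <= f. Hence f is the maximum of those pieces that lie below it.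
   For the nets, the input survives ReLU unchanged on the cube and is carried along by d neurons;
   one extra neuron per maximum stores the running maximum minus the last piece read, which stays
   nonnegative, so each layer reads one more piece. *)

From mathcomp Require Import all_boot all_order all_algebra.
From mathcomp Require Import reals ring lra zify.
From Stdlib Require Import Classical.
Import Order.TTheory GRing.Theory Num.Theory.
Set Implicit Arguments. Unset Strict Implicit. Unset Printing Implicit Defensive.
Local Open Scope ring_scope.

Lemma exists_filter_prop (T : eqType) (l : seq T) (P : T -> Prop) :
  exists l' : seq T, forall t, t \in l' <-> t \in l /\ P t.
Proof.
elim: l => [|a l [l' l'E]]; first by exists [::] => t; split=> [|[]].
have [Pa|nPa] := classic (P a); [exists (a :: l') | exists l'] => t; rewrite !inE.
  split=> [/orP[/eqP->|/l'E[-> Pt]]|[/orP[/eqP->|t_l] Pt]]; rewrite ?eqxx ?orbT //.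
  by apply/orP; right; apply/l'E.
split=> [/l'E[-> Pt]|[/orP[/eqP ta|t_l] Pt]]; first by rewrite orbT.
  by rewrite ta in Pt.
exact/l'E.
Qed.

Section SeqMax.
Variable R : realDomainType.
Implicit Types (s : seq R) (m : R).

Definition is_max s m := m \in s /\ forall y, y \in s -> y <= m.

Lemma is_max_uniq s m1 m2 : is_max s m1 -> is_max s m2 -> m1 = m2.
Proof. by move=> [m1s ub1] [m2s ub2]; apply: le_anti; rewrite ub1 ?ub2. Qed.

Definition foldmax m s := foldl Num.max m s.

Lemma is_max_foldmax m s : is_max (m :: s) (foldmax m s).
Proof.
elim: s m => [|y s IH] m /=; first by split=> [|y]; rewrite ?mem_head // inE => /eqP->.
have [M_in M_ub] := IH (Num.max m y); split.
  move: M_in; rewrite !inE => /orP[/eqP->|->]; last by rewrite !orbT.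
  by case: leP; rewrite eqxx ?orbT.
move=> z; rewrite !inE => /orP[/eqP->|/orP[/eqP->|z_s]].
- by apply: le_trans (M_ub _ (mem_head _ _)); rewrite le_max lexx.
- by apply: le_trans (M_ub _ (mem_head _ _)); rewrite le_max lexx orbT.
- by apply: M_ub; rewrite inE z_s orbT.
Qed.

Lemma exists_argmax (T : eqType) (f : T -> R) (l : seq T) : l != [::] ->
  exists2 p, p \in l & forall q, q \in l -> f q <= f p.
Proof.
case: l => // a l _.
have [/mapP[p p_l ->] ub] : is_max (map f (a :: l)) (foldmax (f a) (map f l)).
  exact: is_max_foldmax.
by exists p => // q q_l; apply/ub/map_f.
Qed.

End SeqMax.


Section AffinePieces.
Variables (R : realType) (d : nat).
Implicit Types (x y : 'cV[R]_d).

Definition aff := ('cV[R]_d * R^o)%type.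
Definition dot (a x : 'cV[R]_d) : R := \sum_(i < d) a i 0 * x i 0.
Definition ev (p : aff) x : R := dot p.1 x + p.2.

Lemma dotD a b x : dot (a + b) x = dot a x + dot b x.
Proof. by rewrite /dot -big_split; apply: eq_bigr => i _; rewrite mxE mulrDl. Qed.

Lemma dotN a x : dot (- a) x = - dot a x.
Proof. by rewrite /dot -sumrN; apply: eq_bigr => i _; rewrite mxE mulNr. Qed.

Lemma dotZ c a x : dot (c *: a) x = c * dot a x.
Proof. by rewrite /dot mulr_sumr; apply: eq_bigr => i _; rewrite mxE mulrA. Qed.

Lemma dot_comb a x y t : dot a (t *: y + (1 - t) *: x) = dot a x + t * (dot a y - dot a x).
Proof.
rewrite /dot mulrBr !mulr_sumr -sumrB -big_split /=.
by apply: eq_bigr => i _; rewrite !mxE; ring.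
Qed.

Lemma dot_trmx a x : (a^T *m x) 0 0 = dot a x.
Proof. by rewrite mxE; apply: eq_bigr => i _; rewrite mxE. Qed.

Lemma evD p q x : ev (p + q) x = ev p x + ev q x.
Proof. by rewrite /ev dotD addrACA. Qed.

Lemma evB p q x : ev (p - q) x = ev p x - ev q x.
Proof. by rewrite /ev dotD dotN opprD addrACA. Qed.

Lemma evZ c p x : ev (c *: p) x = c * ev p x.
Proof. by rewrite /ev dotZ mulrDr. Qed.

Lemma ev_cst c x : ev (0, c) x = c.
Proof. by rewrite /ev /dot big1 ?add0r // => i _; rewrite mxE mul0r. Qed.

Lemma ev_comb p x y t : ev p (t *: y + (1 - t) *: x) = ev p x + t * (ev p y - ev p x).
Proof. by rewrite /ev dot_comb; ring. Qed.

Lemma eq_ev p q y : p.1 = q.1 -> ev p y = ev q y -> ev p =1 ev q.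
Proof. by rewrite /ev => -> /addrI eq2 x; rewrite eq2. Qed.

Lemma is_max_max_fam N (g : 'I_N.+1 -> 'cV[R]_d -> R) x :
  is_max [seq g i x | i <- enum 'I_N.+1] (max_fam g x).
Proof.
split=> [|y /mapP[i _ ->]]; last exact: le_bigmax.
rewrite /max_fam; elim/big_ind: _ => [|a b a_in b_in|i _]; try exact: map_f (mem_enum _ _).
by case: leP.
Qed.

Definition aff_fam (p0 : aff) (ps : seq aff) (i : 'I_(size ps).+1) : 'cV[R]_d -> R :=
  ev (nth p0 (p0 :: ps) i).
Arguments aff_fam : clear implicits.
Definition max_aff (p0 : aff) (ps : seq aff) : 'cV[R]_d -> R := max_fam (aff_fam p0 ps).

Lemma aff_fam_affine p0 ps i : affine_fun (aff_fam p0 ps i).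
Proof. by exists (nth p0 (p0 :: ps) i).1, (nth p0 (p0 :: ps) i).2. Qed.

Lemma is_max_max_aff p0 ps x : is_max [seq ev p x | p <- p0 :: ps] (max_aff p0 ps x).
Proof.
have <- : [seq aff_fam p0 ps i x | i <- enum 'I_(size ps).+1] = [seq ev p x | p <- p0 :: ps].
  by rewrite -[in RHS](mkseq_nth p0 (p0 :: ps)) /mkseq -val_enum_ord -!map_comp.
exact: is_max_max_fam.
Qed.

Lemma max_aff_foldmax p0 ps x :
  max_aff p0 ps x = foldmax (ev p0 x) [seq ev p x | p <- ps].
Proof. exact: is_max_uniq (is_max_max_aff p0 ps x) (is_max_foldmax _ _). Qed.

Lemma exists_max_aff_on (D : 'cV[R]_d -> Prop) (l : seq aff) (phi : 'cV[R]_d -> R) x0 :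
  D x0 -> (forall x, D x -> is_max [seq ev p x | p <- l] (phi x)) ->
  exists p0 ps, forall x, D x -> max_aff p0 ps x = phi x.
Proof.
case: l => [|p0 ps] Dx0 phi_max; first by have [] := phi_max x0 Dx0.
by exists p0, ps => x Dx; apply: is_max_uniq (is_max_max_aff p0 ps x) (phi_max x Dx).
Qed.

Definition max_affine (phi : 'cV[R]_d -> R) :=
  exists l : seq aff, forall x, is_max [seq ev p x | p <- l] (phi x).

Lemma eq_max_affine phi psi : phi =1 psi -> max_affine psi -> max_affine phi.
Proof. by move=> eq_phi [l l_max]; exists l => x; rewrite eq_phi. Qed.

Lemma max_affine_ev p : max_affine (ev p).
Proof. by exists [:: p] => x; split=> [|y]; rewrite ?mem_head // inE => /eqP->. Qed.

Lemma max_affineD phi psi : max_affine phi -> max_affine psi ->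
  max_affine (fun x => phi x + psi x).
Proof.
move=> [l1 max1] [l2 max2]; exists [seq p + q | p <- l1, q <- l2] => x.
have [/mapP[p1 p1_l e1] ub1] := max1 x; have [/mapP[p2 p2_l e2] ub2] := max2 x.
split.
  by apply/mapP; exists (p1 + p2); [exact: allpairs_f | rewrite evD e1 e2].
move=> y /mapP[_ /allpairsP[[p q] [/= p_l q_l ->]] ->].
by rewrite evD lerD // ?ub1 ?ub2 //; apply: map_f.
Qed.

Lemma max_affineZ c phi : 0 <= c -> max_affine phi -> max_affine (fun x => c * phi x).
Proof.
move=> c_ge0 [l l_max]; exists (map ( *:%R c) l) => x.
have [/mapP[p p_l ->] ub] := l_max x; split.
  by apply/mapP; exists (c *: p); rewrite ?evZ ?map_f.
by move=> y /mapP[_ /mapP[q q_l ->] ->]; rewrite evZ ler_wpM2l // ub //; exact: map_f.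
Qed.

Lemma max_affine_max phi psi : max_affine phi -> max_affine psi ->
  max_affine (fun x => Num.max (phi x) (psi x)).
Proof.
move=> [l1 max1] [l2 max2]; exists (l1 ++ l2) => x.
have [in1 ub1] := max1 x; have [in2 ub2] := max2 x.
rewrite map_cat; split; first by case: leP; rewrite mem_cat ?in1 ?in2 ?orbT.
by move=> y; rewrite mem_cat le_max => /orP[/ub1|/ub2] ->; rewrite ?orbT.
Qed.

Lemma ev_ge_cube (p : aff) x : in_cube x -> - (\sum_(i < d) `|p.1 i 0| + `|p.2|) <= ev p x.
Proof.
move=> x_cube; rewrite opprD -sumrN /ev /dot; apply: lerD; last exact: lerNnormlW.
apply: ler_sum => i _; have /andP[x_ge0 x_le1] := x_cube i.
have a_ge : - `|p.1 i 0| <= p.1 i 0 := lerNnormlW (lexx _).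
have a_le : p.1 i 0 <= `|p.1 i 0| := ler_norm _.
nra.
Qed.

Lemma max_affine_lbound phi :
  max_affine phi -> exists2 K, 0 <= K & forall x, in_cube x -> - K <= phi x.
Proof.
case=> [[|p l] phi_max]; first by have [] := phi_max 0.
exists (\sum_(i < d) `|p.1 i 0| + `|p.2|) => [|x x_cube]; first by rewrite addr_ge0 ?sumr_ge0.
have [_ ub] := phi_max x; exact: le_trans (ev_ge_cube p x_cube) (ub _ (mem_head _ _)).
Qed.

End AffinePieces.

Arguments aff_fam {R d} p0 ps i.

Section DifferenceOfConvex.
Variables (R : realType) (d : nat).
Implicit Types (phi psi : 'cV[R]_d -> R).

Definition dc phi :=
  exists g h, [/\ max_affine g, max_affine h & forall x, phi x = g x - h x].

Lemma eq_dc phi psi : phi =1 psi -> dc psi -> dc phi.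
Proof. by move=> eq_phi [g [h [g_max h_max psiE]]]; exists g, h; split=> // x; rewrite eq_phi. Qed.

Lemma dc_ev (p : aff R d) : dc (ev p).
Proof.
exists (ev p), (ev 0); split; try exact: max_affine_ev.
by move=> x; rewrite ev_cst subr0.
Qed.

Lemma dc_cst c : dc (fun _ => c).
Proof. by apply: eq_dc (dc_ev (0, c)) => x; rewrite ev_cst. Qed.

Lemma dc_coord j : dc (fun x : 'cV[R]_d => x j 0).
Proof.
apply: eq_dc (dc_ev (delta_mx j 0, 0)) => x.
rewrite /ev /dot addr0 (bigD1 j) //= mxE !eqxx mul1r big1 ?addr0 // => i /negbTE ij.
by rewrite mxE ij mul0r.
Qed.

Lemma dcD phi psi : dc phi -> dc psi -> dc (fun x => phi x + psi x).
Proof.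
move=> [g1 [h1 [g1_max h1_max E1]]] [g2 [h2 [g2_max h2_max E2]]].
exists (fun x => g1 x + g2 x), (fun x => h1 x + h2 x).
by split; try exact: max_affineD; move=> x; rewrite E1 E2 opprD addrACA.
Qed.

Lemma dcZ c phi : dc phi -> dc (fun x => c * phi x).
Proof.
move=> [g [h [g_max h_max E]]]; have [c_ge0|c_lt0] := leP 0 c.
  exists (fun x => c * g x), (fun x => c * h x).
  by split; try exact: max_affineZ; move=> x; rewrite E mulrBr.
have Nc_ge0 : 0 <= - c by rewrite oppr_ge0 ltW.
exists (fun x => - c * h x), (fun x => - c * g x).
by split; try exact: max_affineZ; move=> x; rewrite E; ring.
Qed.

Lemma dc_sum (I : Type) (r : seq I) (F : I -> 'cV[R]_d -> R) :
  (forall i, dc (F i)) -> dc (fun x => \sum_(i <- r) F i x).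
Proof.
move=> F_dc; elim: r => [|i r IH].
  by apply: eq_dc (dc_cst 0) => x; rewrite big_nil.
by apply: eq_dc (dcD (F_dc i) IH) => x; rewrite big_cons.
Qed.

Lemma dc_max phi psi : dc phi -> dc psi -> dc (fun x => Num.max (phi x) (psi x)).
Proof.
move=> [g1 [h1 [g1_max h1_max E1]]] [g2 [h2 [g2_max h2_max E2]]].
exists (fun x => Num.max (g1 x + h2 x) (g2 x + h1 x)), (fun x => h1 x + h2 x).
split; [by apply: max_affine_max; apply: max_affineD | exact: max_affineD |].
by move=> x; rewrite E1 E2 addr_maxl; congr Num.max; ring.
Qed.

Lemma dc_relu_layer m k (A : affine_map R m k) (v : 'cV[R]_d -> 'cV[R]_m) :
  (forall j, dc (fun x => v x j 0)) -> forall i, dc (fun x => relu (app_aff A (v x)) i 0).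
Proof.
move=> v_dc i; apply: eq_dc (dc_max (dcD (dc_sum _ (fun j => dcZ (A.1 i j) (v_dc j)))
  (dc_cst (A.2 i 0))) (dc_cst 0)) => x.
by rewrite !mxE.
Qed.

Lemma dc_relu_layers w (As : seq (affine_map R w w)) (v : 'cV[R]_d -> 'cV[R]_w) :
  (forall j, dc (fun x => v x j 0)) ->
  forall j, dc (fun x => foldl (fun u A => relu (app_aff A u)) (v x) As j 0).
Proof.
elim: As v => [|A As IH] v v_dc //=.
exact/IH/dc_relu_layer.
Qed.

Lemma relu_net_dc w n (F : 'cV[R]_d -> 'cV[R]_1) :
  relu_net_fun d w n 1 F -> dc (fun x => F x 0 0).
Proof.
case=> [[_ [A FE]] | [_ [A1 [As [An [_ FE]]]]]].
  apply: eq_dc (dc_relu_layer A dc_coord 0) => x; by rewrite FE.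
apply: eq_dc (dc_relu_layer An (dc_relu_layers As (dc_relu_layer A1 dc_coord)) 0) => x.
by rewrite FE.
Qed.

Lemma dc_nonneg_on_cube phi : dc phi ->
  exists g h, [/\ max_affine g, max_affine h & forall x, in_cube x ->
    [/\ phi x = g x - h x, 0 <= g x & 0 <= h x]].
Proof.
move=> [g [h [g_max h_max phiE]]].
have [Kg Kg_ge0 g_lb] := max_affine_lbound g_max.
have [Kh Kh_ge0 h_lb] := max_affine_lbound h_max.
have shift psi : max_affine psi -> max_affine (fun x => psi x + (Kg + Kh)).
  move=> psi_max; apply: eq_max_affine (max_affineD psi_max (max_affine_ev (0, Kg + Kh))).
  by move=> x; rewrite ev_cst.
exists (fun x => g x + (Kg + Kh)), (fun x => h x + (Kg + Kh)); split; try exact: shift.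
move=> x x_cube; have := g_lb x x_cube; have := h_lb x x_cube; rewrite phiE.
by split; [ring | lra | lra].
Qed.

End DifferenceOfConvex.

Lemma relu_net_ge0 (R : realType) din w n dout (F : 'cV[R]_din -> 'cV[R]_dout) :
  relu_net_fun din w n dout F -> forall x i, 0 <= F x i 0.
Proof.
by case=> [[_ [A FE]] | [_ [A1 [As [An [_ FE]]]]]] x i; rewrite FE mxE le_max lexx orbT.
Qed.

Section SmallParameters.
Variable R : realFieldType.
Implicit Types P Q : R -> Prop.

Definition near0 P := exists2 t0, 0 < t0 & forall t, 0 < t <= t0 -> P t.

Lemma near0_and P Q : near0 P -> near0 Q -> near0 (fun t => P t /\ Q t).
Proof.
move=> [t1 t1_gt0 P_t1] [t2 t2_gt0 Q_t2]; exists (Num.min t1 t2); first by rewrite lt_min t1_gt0.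
move=> t /andP[t_gt0]; rewrite le_min => /andP[t_le1 t_le2].
by split; [apply: P_t1 | apply: Q_t2]; rewrite t_gt0.
Qed.

Lemma near0_all (T : eqType) (l : seq T) (P : T -> R -> Prop) :
  (forall p, p \in l -> near0 (P p)) -> near0 (fun t => forall p, p \in l -> P p t).
Proof.
elim: l => [|a l IH] Pl; first by exists 1.
have [t0 t0_gt0 Pt0] :=
  near0_and (Pl a (mem_head _ _)) (IH (fun p pl => Pl p (mem_behead (s := a :: l) pl))).
exists t0 => // t /Pt0[Pa Pl'] p; rewrite inE => /orP[/eqP-> //|]; exact: Pl'.
Qed.

Lemma near0_gt0 (a b : R) : 0 < a -> near0 (fun t => 0 < a + t * b).
Proof.
move=> a_gt0; have nb1_gt0 : 0 < `|b| + 1 by rewrite ltr_wpDl.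
exists (a / (`|b| + 1)) => [|t /andP[t_gt0 t_le]]; first by rewrite divr_gt0.
have tb_le : t * `|b| + t <= a by rewrite -[t in _ + t]mulr1 -mulrDr -ler_pdivlMr.
have : - `|b| <= b := lerNnormlW (lexx _).
nra.
Qed.

Lemma near0_in01 P : near0 P -> exists2 t, 0 < t <= 1 & P t.
Proof.
move=> [t0 t0_gt0 Pt0]; have t_gt0 : 0 < Num.min t0 1 by rewrite lt_min t0_gt0 ltr01.
by exists (Num.min t0 1); last apply: Pt0; rewrite t_gt0 ge_min lexx ?orbT.
Qed.

End SmallParameters.

Section GenericPoint.
Variable R : realType.

Lemma exists_nonroot01 (Q : {poly R}) : Q != 0 -> exists2 t, 0 <= t <= 1 & ~~ root Q t.
Proof.
move=> Q_neq0; pose ts := [seq (k.+1%:R : R)^-1 | k <- iota 0 (size Q)].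
have ts_uniq : uniq ts.
  rewrite map_inj_in_uniq ?iota_uniq // => a b _ _ /invr_inj /eqP.
  by rewrite eqr_nat eqSS => /eqP.
have /allPn[_ /mapP[k _ ->] k_nonroot] : ~~ all (root Q) ts.
  by apply/negP => /(max_poly_roots Q_neq0)/(_ ts_uniq); rewrite size_map size_iota ltnn.
by exists (k.+1%:R)^-1 => //; rewrite invr_ge0 ler0n invf_le1 ?ltr0n // ler1n.
Qed.

Lemma exists_generic_point d (D : seq 'cV[R]_d) (y : 'cV[R]_d) :
  (forall u, u \in D -> u != 0) ->
  exists2 c, in_cube c & forall u, u \in D -> dot u c != dot u y.
Proof.
(* The moment curve t |-> (t, t^2, ..., t^d) meets each hyperplane dot u _ = dot u y in finitely
   many points. *)
move=> D_neq0; pose moment t : 'cV[R]_d := \col_i t ^+ i.+1.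
pose P (u : 'cV[R]_d) : {poly R} := \sum_(i < d) u i 0 *: 'X^(i.+1) - (dot u y)%:P.
have P_moment u t : (P u).[t] = dot u (moment t) - dot u y.
  rewrite hornerD hornerN hornerC horner_sum /dot; congr (_ - _).
  by apply: eq_bigr => i _; rewrite hornerZ hornerXn mxE.
have P_neq0 u : u \in D -> P u != 0.
  move=> u_D; apply: contraNneq (D_neq0 u u_D) => P0; apply/eqP/matrixP => i j.
  have := congr1 (fun p : {poly R} => p`_i.+1) P0.
  rewrite ord1 !mxE coef0 coefB coefC subr0 coef_sum (bigD1 i) //= coefZ coefXn eqxx mulr1.
  rewrite big1 ?addr0 // => k k_i.
  by rewrite coefZ coefXn eqSS eq_sym val_eqE (negbTE k_i) mulr0.
have [t /andP[t_ge0 t_le1] t_nonroot] : exists2 t, 0 <= t <= 1 & ~~ root (\prod_(u <- D) P u) t.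
  by apply: exists_nonroot01; rewrite prodf_seq_neq0; apply/allP.
exists (moment t) => [i|u u_D]; first by rewrite mxE exprn_ge0 ?exprn_ile1.
move: t_nonroot; rewrite /root horner_prod prodf_seq_neq0 => /allP/(_ u u_D).
by rewrite P_moment subr_eq0.
Qed.

End GenericPoint.

Section ConvexPieces.
Variables (R : realType) (d : nat).
Local Notation aff := (aff R d).
Implicit Types (l : seq aff) (p q ps qs : aff) (x y z c : 'cV[R]_d).

Lemma in_cube_comb x y t :
  in_cube x -> in_cube y -> 0 <= t <= 1 -> in_cube (t *: y + (1 - t) *: x).
Proof.
move=> x_cube y_cube /andP[t_ge0 t_le1] i; rewrite !mxE.
have /andP[x_ge0 x_le1] := x_cube i; have /andP[y_ge0 y_le1] := y_cube i.
by apply/andP; split; nra.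
Qed.

Definition dominates l ps x := forall p, p \in l -> ev p =1 ev ps \/ ev p x < ev ps x.

Lemma is_max_dominates l ps x m :
  is_max [seq ev p x | p <- l] m -> ps \in l -> dominates l ps x -> m = ev ps x.
Proof.
move=> [/mapP[p p_l ->] ub] ps_l ps_dom; apply: le_anti.
rewrite ub ?andbT; last exact: map_f.
by case: (ps_dom p p_l) => [->|/ltW].
Qed.

Lemma near0_lt_comb p q x y : ev p x < ev q x ->
  near0 (fun t => ev p (t *: y + (1 - t) *: x) < ev q (t *: y + (1 - t) *: x)).
Proof.
rewrite -subr_gt0 => /(near0_gt0 ((ev q y - ev q x) - (ev p y - ev p x)))[t0 t0_gt0 pos].
by exists t0 => // t /pos; rewrite !ev_comb; lra.
Qed.

Lemma dominates_near l ps x z :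
  dominates l ps x -> near0 (fun t => dominates l ps (t *: z + (1 - t) *: x)).
Proof.
move=> ps_dom; apply: near0_all => p p_l.
case: (ps_dom p p_l) => [eq_p|lt_p]; first by exists 1 => // t _; left.
by have [t0 t0_gt0 lt_t0] := near0_lt_comb z lt_p; exists t0 => // t /lt_t0; right.
Qed.

(* Among the pieces attaining the maximum at y, one of steepest slope towards c dominates near y;
   the hypothesis on c rules out ties between distinct pieces. *)
Lemma exists_dominant l y c m : is_max [seq ev p y | p <- l] m ->
  (forall p q, p \in l -> q \in l -> p.1 != q.1 -> ev p c - ev p y != ev q c - ev q y) ->
  exists2 ps, ps \in l & ev ps y = m /\ near0 (fun t => dominates l ps (t *: c + (1 - t) *: y)).
Proof.
move=> [m_in ub] generic; pose slope p := ev p c - ev p y.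
pose act := [seq p <- l | ev p y == m].
have [ps] : exists2 ps, ps \in act & forall q, q \in act -> slope q <= slope ps.
  apply: exists_argmax; case/mapP: m_in => p p_l m_p.
  have p_act : p \in act by rewrite mem_filter -m_p eqxx.
  by apply: contraTneq p_act => ->.
rewrite mem_filter => /andP[/eqP ps_y ps_l] ps_max.
exists ps => //; split=> //; apply: near0_all => p p_l.
have [/eqP p_y|p_nact] := boolP (ev p y == m).
  have p_act : p \in act by rewrite mem_filter /= p_y eqxx.
  have [eq1|neq1] := eqVneq p.1 ps.1.
    by exists 1 => // t _; left; apply: (eq_ev (y := y)) eq1 _; rewrite p_y ps_y.
  have lt_slope : slope p < slope ps by rewrite lt_neqAle ps_max // generic.
  exists 1 => // t /andP[t_gt0 _]; right.
  by move: lt_slope; rewrite /slope !ev_comb p_y ps_y ltrD2l ltr_pM2l.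
have lt_p : ev p y < ev ps y.
  by rewrite ps_y lt_neqAle p_nact; apply: ub; exact: map_f.
by have [t0 t0_gt0 lt_t0] := near0_lt_comb c lt_p; exists t0 => // t /lt_t0; right.
Qed.

Lemma exists_dominant_point lg lh y mg mh : in_cube y ->
  is_max [seq ev p y | p <- lg] mg -> is_max [seq ev q y | q <- lh] mh ->
  exists ps qs pt, [/\ in_cube pt, ps \in lg, qs \in lh, ev ps y - ev qs y = mg - mh
    & dominates lg ps pt /\ dominates lh qs pt].
Proof.
move=> y_cube mg_max mh_max; pose l := lg ++ lh.
pose D := [seq u <- [seq p.1 - q.1 | p <- l, q <- l] | u != 0].
have [c c_cube c_gen] : exists2 c, in_cube c & forall u, u \in D -> dot u c != dot u y.
  by apply: exists_generic_point => u; rewrite mem_filter => /andP[].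
have generic p q : p \in l -> q \in l -> p.1 != q.1 -> ev p c - ev p y != ev q c - ev q y.
  move=> p_l q_l pq; have /c_gen : p.1 - q.1 \in D.
    by rewrite mem_filter subr_eq0 pq; exact: (allpairs_f (fun p q : aff => p.1 - q.1)).
  by apply: contraNneq => e; apply/eqP; move: e; rewrite !dotD !dotN /ev; lra.
have [ps ps_lg [ps_y ps_near]] : exists2 ps, ps \in lg &
    ev ps y = mg /\ near0 (fun t => dominates lg ps (t *: c + (1 - t) *: y)).
  apply: exists_dominant mg_max _ => p q p_lg q_lg.
  by apply: generic; rewrite mem_cat ?p_lg ?q_lg.
have [qs qs_lh [qs_y qs_near]] : exists2 qs, qs \in lh &
    ev qs y = mh /\ near0 (fun t => dominates lh qs (t *: c + (1 - t) *: y)).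
  apply: exists_dominant mh_max _ => p q p_lh q_lh.
  by apply: generic; rewrite mem_cat ?p_lh ?q_lh ?orbT.
have [t /andP[t_gt0 t_le1] [ps_dom qs_dom]] := near0_in01 (near0_and ps_near qs_near).
exists ps, qs, (t *: c + (1 - t) *: y); split; rewrite ?ps_y ?qs_y //.
by apply: in_cube_comb; rewrite ?(ltW t_gt0).
Qed.

Section ConvexDC.
Variables (lg lh : seq aff) (g h f : 'cV[R]_d -> R).
Hypothesis dc_f : forall x, in_cube x ->
  [/\ is_max [seq ev p x | p <- lg] (g x), is_max [seq ev q x | q <- lh] (h x) & f x = g x - h x].
Hypothesis f_convex : convex_on_cube f.

(* f agrees with the affine ps - qs at pt and on an initial part of the segment from pt to z;
   convexity of f along that segment forces ps - qs <= f at z. *)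
Lemma convex_dc_le_dominant ps qs pt : in_cube pt -> ps \in lg -> qs \in lh ->
  dominates lg ps pt -> dominates lh qs pt -> forall z, in_cube z -> ev (ps - qs) z <= f z.
Proof.
move=> pt_cube ps_lg qs_lh ps_dom qs_dom z z_cube.
have f_dom w : in_cube w -> dominates lg ps w -> dominates lh qs w -> f w = ev (ps - qs) w.
  move=> w_cube; have [g_max h_max ->] := dc_f w_cube.
  by move=> /(is_max_dominates g_max ps_lg)-> /(is_max_dominates h_max qs_lh)->; rewrite evB.
have [s /andP[s_gt0 s_le1] [ps_dom' qs_dom']] :=
  near0_in01 (near0_and (dominates_near z ps_dom) (dominates_near z qs_dom)).
have s_01 : 0 <= s <= 1 by rewrite ltW.
have w_cube : in_cube (s *: z + (1 - s) *: pt) by apply: in_cube_comb.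
have := f_convex z_cube pt_cube s_01.
rewrite (f_dom _ w_cube ps_dom' qs_dom') (f_dom _ pt_cube ps_dom qs_dom) ev_comb => le_f.
by rewrite -(ler_pM2l s_gt0); lra.
Qed.

Lemma convex_dc_is_max_on_cube :
  exists l, forall y, in_cube y -> is_max [seq ev r y | r <- l] (f y).
Proof.
have [l l_sub] := exists_filter_prop [seq p - q | p <- lg, q <- lh]
  (fun r => forall z, in_cube z -> ev r z <= f z).
exists l => y y_cube; have [g_max h_max fE] := dc_f y_cube.
have [ps [qs [pt [pt_cube ps_lg qs_lh ps_qs_y [ps_dom qs_dom]]]]] :=
  exists_dominant_point y_cube g_max h_max.
split; last by move=> _ /mapP[r /l_sub[_ r_le] ->]; apply: r_le.
apply/mapP; exists (ps - qs); last by rewrite evB ps_qs_y fE.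
apply/l_sub; split; first exact: allpairs_f.
exact: convex_dc_le_dominant pt_cube ps_lg qs_lh ps_dom qs_dom.
Qed.

End ConvexDC.

End ConvexPieces.

Section RunningMaxNets.
Variables (R : realType) (d : nat).
Local Notation aff := (aff R d).
Implicit Types (x : 'cV[R]_d) (p q : aff) (ps qs : seq aff).

Lemma relu_col m k (u : 'cV[R]_m) (v : 'cV[R]_k) : relu (col_mx u v) = col_mx (relu u) (relu v).
Proof. by apply/matrixP => i j; rewrite !mxE; case: splitP => k' _; rewrite !mxE. Qed.

Lemma relu_id k (u : 'cV[R]_k) : (forall i, 0 <= u i 0) -> relu u = u.
Proof. by move=> u_ge0; apply/matrixP => i j; rewrite ord1 mxE; apply/max_idPl. Qed.

Lemma ev_trmx p x : (p.1^T *m x + \col_(i < 1) p.2) 0 0 = ev p x.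
Proof. by rewrite mxE dot_trmx mxE. Qed.

Definition layer e := ('M[R]_(e, d) * 'M[R]_e * 'cV[R]_e)%type.

Definition step e x (z : 'cV[R]_e) (L : layer e) : 'cV[R]_e :=
  relu (L.1.1 *m x + L.1.2 *m z + L.2).

Lemma net_of_layers e (L0 : layer e) (Ls : seq (layer e)) p (b : 'M[R]_(1, e)) :
  exists G, relu_net_fun d (d + e) (size Ls).+2 1 G /\ forall x, in_cube x ->
    G x 0 0 = Num.max (ev p x + (b *m foldl (step x) 0 (L0 :: Ls)) 0 0) 0.
Proof.
pose first (L : layer e) : affine_map R d (d + e) := (col_mx 1%:M L.1.1, col_mx 0 L.2).
pose hidden (L : layer e) : affine_map R (d + e) (d + e) :=
  (block_mx 1%:M 0 L.1.1 L.1.2, col_mx 0 L.2).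
pose readout : affine_map R (d + e) 1 := (row_mx p.1^T b, \col_(i < 1) p.2).
exists (fun x => relu (app_aff readout
  (foldl (fun v A => relu (app_aff A v)) (relu (app_aff (first L0) x)) (map hidden Ls)))).
split=> [|x x_cube].
  right; split=> //; exists (first L0), (map hidden Ls), readout.
  by rewrite size_map subn2.
have relu_x : relu x = x by apply: relu_id => i; have /andP[] := x_cube i.
have first_x : relu (app_aff (first L0) x) = col_mx x (step x 0 L0).
  by rewrite /app_aff mul_col_mx add_col_mx mul1mx addr0 relu_col relu_x /step mulmx0 addr0.
have hidden_x z : foldl (fun v A => relu (app_aff A v)) (col_mx x z) (map hidden Ls) =
    col_mx x (foldl (step x) z Ls).
  elim: Ls z => [|L Ls IH] z //=; rewrite -IH; congr foldl.
  by rewrite /app_aff mul_block_col add_col_mx mul1mx mul0mx !addr0 relu_col relu_x.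
by rewrite first_x hidden_x /app_aff /= mul_row_col [relu _ _ _]mxE addrAC [in LHS]mxE ev_trmx.
Qed.

Definition add_slot e (j : 'I_e) p : layer e :=
  (\matrix_(k, i) ((k == j)%:R * p.1 i 0), 1%:M, \col_k ((k == j)%:R * p.2)).

Lemma step_add_slot e x (j k : 'I_e) p (z : 'cV[R]_e) :
  step x z (add_slot j p) k 0 = Num.max ((k == j)%:R * ev p x + z k 0) 0.
Proof.
rewrite /step mxE mul1mx !mxE /ev /dot mulrDr mulr_sumr; congr Num.max.
rewrite addrAC; congr (_ + _ + _); apply: eq_bigr => i _; rewrite mxE; ring.
Qed.

Lemma foldl_idle e x (j : 'I_e) n (z : 'cV[R]_e) :
  (forall k, 0 <= z k 0) -> foldl (step x) z (nseq n (add_slot j 0)) = z.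
Proof.
move=> z_ge0; have idle_z : step x z (add_slot j 0) = z.
  apply/matrixP => k k'; rewrite ord1 step_add_slot (ev_cst 0) mulr0 add0r.
  exact/max_idPl/z_ge0.
by elim: n => //= n; rewrite idle_z.
Qed.

Definition max_layers e (j : 'I_e) (q0 : aff) (qs : seq aff) : seq (layer e) :=
  pairmap (fun q q' => add_slot j (q - q')) q0 qs.

(* Slot j holds m - ev q x >= 0 for the running maximum m and the last piece q read: adding
   ev (q - q') x and applying ReLU gives max m (ev q' x) - ev q' x. *)
Lemma foldl_max_layers e x (j : 'I_e) q0 qs (z : 'cV[R]_e) m :
  (forall k, 0 <= z k 0) -> z j 0 = m - ev q0 x ->
  let z' := foldl (step x) z (max_layers j q0 qs) in
  [/\ forall k, 0 <= z' k 0, z' j 0 = foldmax m [seq ev q x | q <- qs] - ev (last q0 qs) x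
    & forall k, k != j -> z' k 0 = z k 0].
Proof.
elim: qs q0 z m => [|q1 qs IH] q0 z m z_ge0 z_j //=.
set z1 := step x z (add_slot j (q0 - q1)).
have z1_ge0 k : 0 <= z1 k 0 by rewrite step_add_slot le_max lexx orbT.
have z1_j : z1 j 0 = Num.max m (ev q1 x) - ev q1 x.
  by rewrite step_add_slot eqxx mul1r evB z_j addr_maxl; congr Num.max; ring.
have [z'_ge0 z'_j z'_other] := IH q1 z1 _ z1_ge0 z1_j.
split=> // k k_j; rewrite z'_other // step_add_slot (negbTE k_j) mul0r add0r.
exact/max_idPl.
Qed.

Lemma net_max_aff_diff e (j1 j2 : 'I_e) p0 ps q0 qs n :
  j1 != j2 -> (size ps + size qs + 2 <= n)%N ->
  exists G, relu_net_fun d (d + e) n 1 G /\ forall x, in_cube x ->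
    G x 0 0 = Num.max (max_aff p0 ps x - max_aff q0 qs x) 0.
Proof.
move=> j12 n_ge; set lp := last p0 ps; set lq := last q0 qs.
pose Ls := max_layers j1 p0 ps ++ max_layers j2 q0 qs ++
  nseq (n - (size ps + size qs + 2)) (add_slot j1 0).
have [G [netG GE]] := net_of_layers (add_slot j1 0) Ls (lp - lq) (delta_mx 0 j1 - delta_mx 0 j2).
exists G; split.
  suff -> : n = (size Ls).+2 by [].
  by rewrite !size_cat !size_pairmap size_nseq; lia.
move=> x x_cube; rewrite GE //; congr Num.max.
have z0_ge0 k : 0 <= (0 : 'cV[R]_e) k 0 by rewrite mxE.
rewrite -[_ :: Ls]/(nseq 1 (add_slot j1 0) ++ Ls) /Ls !foldl_cat (foldl_idle _ _ 1 z0_ge0).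
have z0_j1 : (0 : 'cV[R]_e) j1 0 = ev p0 x - ev p0 x by rewrite mxE subrr.
have [z1_ge0 z1_j1 z1_other] := foldl_max_layers ps z0_ge0 z0_j1.
have z1_j2 : foldl (step x) 0 (max_layers j1 p0 ps) j2 0 = ev q0 x - ev q0 x.
  by rewrite z1_other 1?eq_sym // mxE subrr.
have [z2_ge0 z2_j2 z2_other] := foldl_max_layers qs z1_ge0 z1_j2.
rewrite (foldl_idle _ _ _ z2_ge0) mulmxBl -!rowE !mxE z2_j2 z2_other // z1_j1.
by rewrite !max_aff_foldmax evB; ring.
Qed.

Lemma net_max_aff e (j : 'I_e) p0 ps :
  exists G, relu_net_fun d (d + e) (size ps).+1 1 G /\ forall x, in_cube x ->
    G x 0 0 = Num.max (max_aff p0 ps x) 0.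
Proof.
case: ps => [|p1 ps].
  exists (fun x => relu (app_aff (p0.1^T, \col_(i < 1) p0.2) x)); split.
    by left; split=> //; exists (p0.1^T, \col_(i < 1) p0.2).
  by move=> x _; rewrite max_aff_foldmax mxE ev_trmx.
have [G [netG GE]] := net_of_layers (add_slot j (p0 - p1)) (max_layers j p1 ps)
  (last p1 ps) (delta_mx 0 j).
exists G; split; first by rewrite size_pairmap in netG.
move=> x x_cube; rewrite GE //; congr Num.max.
have z0_ge0 k : 0 <= (0 : 'cV[R]_e) k 0 by rewrite mxE.
have z0_j : (0 : 'cV[R]_e) j 0 = ev p0 x - ev p0 x by rewrite mxE subrr.
have [_ z_j _] := foldl_max_layers (p1 :: ps) z0_ge0 z0_j.
rewrite -rowE mxE -[add_slot _ _ :: _]/(max_layers j p0 (p1 :: ps)) z_j.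
by rewrite max_aff_foldmax; ring.
Qed.

End RunningMaxNets.

Lemma relu_net_max_aff_decomposition (R : realType) d w n (F : 'cV[R]_d -> 'cV[R]_1) :
  relu_net_fun d w n 1 F -> exists p0 ps q0 qs,
    (forall x, in_cube x -> [/\ F x 0 0 = max_aff p0 ps x - max_aff q0 qs x,
                               0 <= max_aff p0 ps x & 0 <= max_aff q0 qs x]) /\
    (convex_on_cube (fun x => F x 0 0) -> forall x, in_cube x -> max_aff q0 qs x = 0).
Proof.
move=> netF; have zero_cube : in_cube (0 : 'cV[R]_d) by move=> i; rewrite mxE lexx ler01.
have [F_convex|F_nconvex] := classic (convex_on_cube (fun x => F x 0 0)).
  have [g [h [[lg g_max] [lh h_max] FE]]] := relu_net_dc netF.
  have [l l_max] := convex_dc_is_max_on_cube (fun x _ => And3 (g_max x) (h_max x) (FE x)) F_convex.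
  have [c0 [cs csE]] := exists_max_aff_on zero_cube l_max.
  have zeroE x : max_aff 0 [::] x = 0 by rewrite max_aff_foldmax ev_cst.
  exists c0, cs, 0, [::]; split=> // x x_cube.
  by rewrite zeroE subr0 csE //; split=> //; apply: relu_net_ge0 netF x 0.
have [g [h [[lg g_max] [lh h_max] FE]]] := dc_nonneg_on_cube (relu_net_dc netF).
have [p0 [ps psE]] := exists_max_aff_on zero_cube (fun x _ => g_max x).
have [q0 [qs qsE]] := exists_max_aff_on zero_cube (fun x _ => h_max x).
by exists p0, ps, q0, qs; split=> // x x_cube; rewrite psE ?qsE //; exact: FE.
Qed.

Theorem theorem2 (R : realType) (d w n : nat) (F : 'cV[R]_d -> 'cV[R]_1) :
  (0 < d)%N -> (0 < w)%N -> relu_net_fun d w n 1 F ->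
  exists (N M : nat) (g : 'I_N.+1 -> 'cV[R]_d -> R) (h : 'I_M.+1 -> 'cV[R]_d -> R),
    (forall a, affine_fun (g a)) /\ (forall b, affine_fun (h b)) /\
    (forall x, in_cube x ->
       [/\ F x 0 0 = max_fam g x - max_fam h x, 0 <= max_fam g x & 0 <= max_fam h x]) /\
    (exists G : 'cV[R]_d -> 'cV[R]_1,
       relu_net_fun d (d + 3) (2 * (M.+1 + N.+1)) 1 G /\
       forall x, in_cube x -> G x 0 0 = F x 0 0) /\
    (convex_on_cube (fun x => F x 0 0) ->
       (forall x, in_cube x -> max_fam h x = 0) /\
       exists G : 'cV[R]_d -> 'cV[R]_1,
         relu_net_fun d (d + 1) N.+1 1 G /\
         forall x, in_cube x -> G x 0 0 = F x 0 0).
Proof.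
move=> _ _ netF.
have [p0 [ps [q0 [qs [decF convexF]]]]] := relu_net_max_aff_decomposition netF.
have FE x : in_cube x -> Num.max (max_aff p0 ps x - max_aff q0 qs x) 0 = F x 0 0.
  by move=> x_cube; have [<- _ _] := decF x x_cube; apply/max_idPl/(relu_net_ge0 netF).
exists (size ps), (size qs), (aff_fam p0 ps), (aff_fam q0 qs).
split; first exact: aff_fam_affine.
split; first exact: aff_fam_affine.
split; first exact: decF.
split.
  (* Only two of the three extra neurons are used. *)
  have [|G [netG GE]] :=
    @net_max_aff_diff _ _ 3 0 1 p0 ps q0 qs (2 * ((size qs).+1 + (size ps).+1)) isT.
    by lia.
  by exists G; split=> // x x_cube; rewrite GE ?FE.
move=> /convexF h0; split=> //.
have [G [netG GE]] := net_max_aff (0 : 'I_1) p0 ps.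
by exists G; split=> // x x_cube; rewrite GE // -FE // h0 // subr0.
Qed.
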